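(* Let $K=2$ and suppose that for every horizon $T$ (a multiple of $100$) a valid pair $(\eta,\gamma)=(\eta_T,\gamma_T)$ in the non-trivial regime is chosen. Then there exists $T_0$ such that for all $T\ge T_0$, WSU-UX run on the two-phase loss sequence satisfies $\mathbb{E}[\pi_{t,1}]\le \frac{1}{KT}$ for every round $t$ with $\frac{T_1}{2}\le t\le T_1$.
   Context: WSU-UX. Fix integers $K\ge 2$ and $T\ge 1$ and hyperparameters $\eta,\gamma$. The pair $(\eta,\gamma)$ is called valid if $\eta,\gamma\in(0,1/2)$ and $\eta K/\gamma\le 1/2$. Given a fixed loss sequence $\ell_t\in[0,1]^K$, WSU-UX sets $\pi_{1,i}=1/K$ and in each round $t$: forms $\tilde\pi_{t,i}=(1-\gamma)\pi_{t,i}+\gamma/K$; draws $I_t$ with $\Pr(I_t=i\mid\mathcal F_{t-1})=\tilde\pi_{t,i}$; sets $\hat\ell_{t,i}=\ell_{t,i}\mathbf 1[I_t=i]/\tilde\pi_{t,i}$; and updates $\pi_{t+1,i}=\pi_{t,i}\bigl(1-\eta(\hat\ell_{t,i}-\sum_{j}\pi_{t,j}\hat\ell_{t,j})\bigr)$; $\mathcal F_t$ is the history generated by $I_1,\dots,I_t$. Non-trivial regime: $\eta\ge T^{-2/3}$ and $\gamma\le T^{-1/3}$. Two-phase loss sequence ($K=2$, $T$ a multiple of $100$, $T_1=T/100$): $\ell_{t,1}=1,\ell_{t,2}=0$ for $1\le t\le T_1$ and $\ell_{t,1}=0,\ell_{t,2}=1$ for $T_1<t\le T$. *)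

From HB Require Import structures.
From mathcomp Require Import all_boot all_order all_algebra.
From mathcomp Require Import all_classical all_reals all_analysis.
Set Implicit Arguments. Unset Strict Implicit. Unset Printing Implicit Defensive.
Import Order.TTheory GRing.Theory Num.Theory.
Local Open Scope ring_scope.

Section WSUUX.
Variables (R : realType) (K : nat).

(* A probability-like weight vector over the K arms (arms are 'I_K;
   arm i of the paper is the ordinal i-1). *)
Definition weights := {ffun 'I_K -> R}.

Definition wsu_tilde (gamma : R) (p : weights) (i : 'I_K) : R :=
  (1 - gamma) * p i + gamma / K%:R.

Definition wsu_lhat (gamma : R) (l : 'I_K -> R) (p : weights) (It : 'I_K)
  (i : 'I_K) : R :=
  l i * (It == i)%:R / wsu_tilde gamma p i.

Definition wsu_update (eta gamma : R) (l : 'I_K -> R) (p : weights)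
  (It : 'I_K) : weights :=
  [ffun i => p i * (1 - eta * (wsu_lhat gamma l p It i
                                - \sum_(j < K) p j * wsu_lhat gamma l p It j))].

Definition wsu_init : weights := [ffun => 1 / K%:R].

(* Running the algorithm from round s with weights p along the history
   h = [:: I_s; I_(s+1); ...] returns (probability of that history, given
   the past, i.e. the product of tilde pi_{r, I_r}, and the weights after it). *)
Fixpoint wsu_run (eta gamma : R) (loss : nat -> 'I_K -> R) (s : nat)
  (p : weights) (h : seq 'I_K) : R * weights :=
  match h with
  | [::] => (1, p)
  | i :: h' =>
      let r := wsu_run eta gamma loss s.+1 (wsu_update eta gamma (loss s) p i) h' in
      (wsu_tilde gamma p i * r.1, r.2)
  end.

(* E[ pi_{t,i} ] for t >= 1: expectation over histories I_1, ..., I_{t-1}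
   (each drawn with Pr(I_r = j | F_{r-1}) = tilde pi_{r,j}). *)
Definition wsu_expected_weight (eta gamma : R) (loss : nat -> 'I_K -> R)
  (t : nat) (i : 'I_K) : R :=
  \sum_(h : (t.-1).-tuple 'I_K)
     (wsu_run eta gamma loss 1 wsu_init h).1 * (wsu_run eta gamma loss 1 wsu_init h).2 i.

End WSUUX.

Definition wsu_valid (R : realType) (K : nat) (eta gamma : R) : Prop :=
  [/\ 0 < eta < 1/2, 0 < gamma < 1/2 & eta * K%:R / gamma <= 1/2].

Definition wsu_nontrivial (R : realType) (T : nat) (eta gamma : R) : Prop :=
  (T%:R `^ (- (2 / 3)) <= eta) /\ (gamma <= T%:R `^ (- (1 / 3))).

(* Two-phase loss sequence for K = 2 with T_1 = T / 100 (rounds t >= 1):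
   arm 1 (ord0) has loss 1 and arm 2 loss 0 for t <= T_1, then swapped. *)
Definition two_phase_loss (R : realType) (T : nat) (t : nat) (i : 'I_2) : R :=
  if (t <= T %/ 100)%N then (if i == ord0 then 1 else 0)
  else (if i == ord0 then 0 else 1).

From HB Require Import structures.
From mathcomp Require Import all_boot all_order all_algebra.
From mathcomp Require Import all_classical all_reals all_analysis.
From mathcomp Require Import ring lra zify.
Import Order.TTheory GRing.Theory Num.Theory.
Local Open Scope ring_scope.
Set Implicit Arguments. Unset Strict Implicit.

(* While arm 1 has loss 1 and arm 2 loss 0, drawing arm 2 leaves the weights
   unchanged, and the conditional expectation of the next weight of arm 1 is
   pi_1 - eta pi_1 pi_2.  Validity keeps pi_1 <= 1/2 along every history, hence
   pi_2 >= 1/2 and E[pi_{t,1}] <= (1/2) (1 - eta/2)^(t-1).  Since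
   (1 - x)^n <= (1 + x)^(-n), it remains to see (1 + eta/2)^(t-1) >= T: by
   Bernoulli's inequality (1 + eta/2)^(t-1) >= (t eta / 12)^6, and t >= T/200,
   eta >= T^(-2/3) make this of order T^2. *)

Lemma ord2P (i : 'I_2) : i = ord0 \/ i = ord_max.
Proof. by case: i => [[|[|k]] Hk]; [left|right|]; try exact: val_inj. Qed.

Lemma big_ord2 (V : nmodType) (f : 'I_2 -> V) :
  \sum_(i < 2) f i = f ord0 + f ord_max.
Proof. by rewrite !big_ord_recl big_ord0 addr0; congr (_ + f _); exact: val_inj. Qed.

Section ExpectedWeight.
Variables (R : realType) (K : nat) (eta gamma : R) (loss : nat -> 'I_K -> R).

Definition wsu_expected_from (n s : nat) (p : weights R K) (i : 'I_K) : R :=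
  \sum_(h : n.-tuple 'I_K)
    (wsu_run eta gamma loss s p h).1 * (wsu_run eta gamma loss s p h).2 i.

Lemma wsu_expected_from0 s p i : wsu_expected_from 0 s p i = p i.
Proof.
rewrite /wsu_expected_from (bigD1 [tuple]) //= big1 ?addr0 ?mul1r // => h.
by rewrite [h]tuple0 => /negP[].
Qed.

Lemma wsu_expected_fromS n s p i :
  wsu_expected_from n.+1 s p i = \sum_(j < K) wsu_tilde gamma p j *
    wsu_expected_from n s.+1 (wsu_update eta gamma (loss s) p j) i.
Proof.
rewrite /wsu_expected_from.
rewrite (reindex (fun x : 'I_K * n.-tuple 'I_K => [tuple of x.1 :: x.2])) /=.
  rewrite -(pair_big xpredT xpredT (fun j (h : n.-tuple 'I_K) =>
     (wsu_run eta gamma loss s p [tuple of j :: h]).1 *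
     (wsu_run eta gamma loss s p [tuple of j :: h]).2 i)) /=.
  apply: eq_bigr => j _; rewrite big_distrr /=.
  by apply: eq_bigr => h _; rewrite mulrA.
exists (fun h : n.+1.-tuple 'I_K => (thead h, [tuple of behead h])).
  by move=> [j h] _ /=; congr (_, _); exact: val_inj.
by move=> h _ /=; rewrite [in RHS](tuple_eta h).
Qed.

Lemma wsu_expected_weightE t i :
  wsu_expected_weight eta gamma loss t i
  = wsu_expected_from t.-1 1 (wsu_init R K) i.
Proof. by []. Qed.

End ExpectedWeight.

Section PhaseOne.
Variables (R : realType) (eta gamma : R) (l : 'I_2 -> R).
Hypotheses (l0 : l ord0 = 1) (l1 : l ord_max = 0).

Definition first_arm_minor (p : weights R 2) : Prop :=
  0 <= p ord0 <= 1/2 /\ p ord0 + p ord_max = 1.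

Lemma wsu_update_ord_max p : wsu_update eta gamma l p ord_max = p.
Proof.
apply/ffunP => i; rewrite ffunE /wsu_lhat big_ord2 l0 l1 /=.
by case: (ord2P i) => ->; rewrite /= ?l0 ?l1 !(mul0r, mulr0, subr0, addr0, mulr1).
Qed.

Lemma wsu_update_ord0_ord0 p : wsu_update eta gamma l p ord0 ord0 =
  p ord0 * (1 - eta * ((1 - p ord0) / wsu_tilde gamma p ord0)).
Proof.
rewrite ffunE /wsu_lhat big_ord2 l0 l1 /= !(mul0r, mulr0, subr0, addr0, mulr1, mul1r).
by rewrite mulrBl mul1r.
Qed.

Lemma wsu_update_ord0_ord_max p : wsu_update eta gamma l p ord0 ord_max =
  p ord_max * (1 + eta * (p ord0 / wsu_tilde gamma p ord0)).
Proof.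
rewrite ffunE /wsu_lhat big_ord2 l0 l1 /= !(mul0r, mulr0, subr0, addr0, mulr1, mul1r).
by rewrite sub0r mulrN opprK.
Qed.

Hypothesis valid : wsu_valid 2 eta gamma.

Lemma wsu_tilde_ord0_ge p : first_arm_minor p -> gamma / 2 <= wsu_tilde gamma p ord0.
Proof.
have [_ /andP[gamma_gt0 gamma_lt] _] := valid.
case=> /andP[p0_ge0 _] _; rewrite /wsu_tilde.
have : 0 <= (1 - gamma) * p ord0 by apply: mulr_ge0; lra.
lra.
Qed.

Lemma eta_le_gamma : eta <= gamma / 4.
Proof.
have [_ /andP[gamma_gt0 _] eta_gamma] := valid.
by move: eta_gamma; rewrite ler_pdivrMr // => h; lra.
Qed.

Lemma first_arm_minor_update p i :
  first_arm_minor p -> first_arm_minor (wsu_update eta gamma l p i).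
Proof.
move=> Hp; case: (ord2P i) => ->; last by rewrite wsu_update_ord_max.
have [/andP[eta_gt0 _] _ _] := valid.
have t0 := wsu_tilde_ord0_ge Hp; have := eta_le_gamma.
case: Hp => /andP[p0_ge0 p0_le] p_sum eta_le.
have t0_gt0 : 0 < wsu_tilde gamma p ord0 by lra.
have c_ge0 : 0 <= (1 - p ord0) / wsu_tilde gamma p ord0 by apply: divr_ge0; lra.
have ec_le1 : eta * ((1 - p ord0) / wsu_tilde gamma p ord0) <= 1.
  by rewrite mulrA ler_pdivrMr // mul1r; nra.
have ec_ge0 : 0 <= eta * ((1 - p ord0) / wsu_tilde gamma p ord0).
  by apply: mulr_ge0; lra.
rewrite /first_arm_minor wsu_update_ord0_ord0 wsu_update_ord0_ord_max.
split; first by apply/andP; split; nra.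
have -> : p ord_max = 1 - p ord0 by lra.
by field; apply/negbT/gt_eqF; lra.
Qed.

Lemma wsu_expected_update p : first_arm_minor p ->
  \sum_(i < 2) wsu_tilde gamma p i * wsu_update eta gamma l p i ord0
  = p ord0 - eta * p ord0 * p ord_max.
Proof.
move=> Hp; have t0 := wsu_tilde_ord0_ge Hp.
have [_ /andP[gamma_gt0 _] _] := valid.
rewrite big_ord2 wsu_update_ord_max wsu_update_ord0_ord0.
case: Hp => _ p_sum; have p1 : p ord_max = 1 - p ord0 by lra.
move: t0; rewrite /wsu_tilde p1 => t0.
by field; apply/negbT/gt_eqF; lra.
Qed.

End PhaseOne.

Lemma wsu_expected_from_decay (R : realType) (eta gamma : R)
    (loss : nat -> 'I_2 -> R) : wsu_valid 2 eta gamma ->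
  forall n s p,
  (forall r, (s <= r < s + n)%N -> loss r ord0 = 1 /\ loss r ord_max = 0) ->
  first_arm_minor p ->
  wsu_expected_from eta gamma loss n s p ord0 <= p ord0 * (1 - eta / 2) ^+ n.
Proof.
move=> valid; have [/andP[eta_gt0 _] /andP[gamma_gt0 gamma_lt] _] := valid.
elim=> [|n IH] s p phase p_minor; first by rewrite wsu_expected_from0 expr0 mulr1.
have [l0 l1] : loss s ord0 = 1 /\ loss s ord_max = 0 by apply: phase; lia.
have phase' r : (s.+1 <= r < s.+1 + n)%N -> loss r ord0 = 1 /\ loss r ord_max = 0.
  by move=> hr; apply: phase; lia.
have decay_ge0 : 0 <= (1 - eta / 2) ^+ n.
  by apply: exprn_ge0; have := eta_le_gamma valid; lra.
have step i : wsu_tilde gamma p i *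
    wsu_expected_from eta gamma loss n s.+1 (wsu_update eta gamma (loss s) p i) ord0
  <= wsu_tilde gamma p i * wsu_update eta gamma (loss s) p i ord0 * (1 - eta / 2) ^+ n.
  rewrite -mulrA; apply: ler_wpM2l.
    case: p_minor => /andP[p0_ge0 p0_le] p_sum; rewrite /wsu_tilde.
    case: (ord2P i) => ->; apply: addr_ge0; try apply: mulr_ge0; lra.
  apply: IH phase' _.
  exact: first_arm_minor_update l0 l1 valid _ i p_minor.
rewrite wsu_expected_fromS; apply: le_trans (ler_sum _ (fun i _ => step i)) _.
rewrite -mulr_suml wsu_expected_update // exprS mulrA.
apply: ler_wpM2r => //.
case: p_minor => /andP[p0_ge0 p0_le] p_sum.
have : 0 <= eta * p ord0 by apply: mulr_ge0; lra.
nra.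
Qed.

Lemma nontrivial_eta_cube (R : realType) (T : nat) (eta : R) : (0 < T)%N ->
  T%:R `^ (- (2 / 3)) <= eta -> 1 <= eta ^+ 3 * T%:R ^+ 2.
Proof.
move=> T_gt0 eta_ge; have T0 : 0 < T%:R :> R by rewrite ltr0n.
set z := (T%:R : R) `^ (- (2 / 3)).
have z_ge0 : 0 <= z by apply: powR_ge0.
have z3 : z ^+ 3 = (T%:R ^+ 2)^-1.
  rewrite -powR_mulrn // /z -powRrM.
  have -> : - (2 / 3) * 3%:R = - (2%:R) :> R by field.
  by rewrite powRN powR_mulrn // ltW.
have : (T%:R ^+ 2)^-1 <= eta ^+ 3.
  by rewrite -z3; apply: lerXn2r; rewrite ?nnegrE //; exact: le_trans z_ge0 eta_ge.
by rewrite -(ler_pM2r (exprn_gt0 2 T0)) mulVf // gt_eqF // exprn_gt0.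
Qed.

Lemma bernoulli_ineq (R : realDomainType) (x : R) (n : nat) :
  -1 <= x -> 1 + n%:R * x <= (1 + x) ^+ n.
Proof.
move=> x_ge; elim: n => [|n IH]; first by rewrite mul0r addr0 expr0.
rewrite exprSr -natr1.
have : 0 <= n%:R * x ^+ 2 by apply: mulr_ge0; rewrite ?sqr_ge0.
have : (1 + n%:R * x) * (1 + x) <= (1 + x) ^+ n * (1 + x).
  by apply: ler_wpM2r => //; lra.
rewrite expr2; nra.
Qed.

Lemma horizon_le_growth (R : realType) (eta : R) (T m : nat) : 0 <= eta ->
  1 <= eta ^+ 3 * T%:R ^+ 2 -> (4800 ^ 6 <= T)%N -> (T <= 2400 * m)%N ->
  T%:R <= (1 + eta / 2) ^+ (m * 6).
Proof.
move=> eta_ge0 eta_cube T_large T_le.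
set c : R := 4800%:R; set y := m%:R * (eta / 2).
(* [T_large] is kept away from lra and lia, which would evaluate [4800 ^ 6]
   in unary. *)
have {T_large}cT : c ^+ 6 * T%:R <= T%:R ^+ 2.
  by rewrite expr2 ler_wpM2r // /c -natrX ler_nat.
have c_gt0 : 0 < c by rewrite ltr0n.
have y_ge0 : 0 <= y by apply: mulr_ge0 => //; lra.
have T2 : T%:R ^+ 2 <= (T%:R * eta) ^+ 6.
  have -> : (T%:R * eta) ^+ 6 = T%:R ^+ 2 * (eta ^+ 3 * T%:R ^+ 2) ^+ 2 by ring.
  by rewrite -{1}[T%:R ^+ 2]mulr1 ler_wpM2l ?exprn_ge0 ?exprn_ege1.
have Teta : T%:R * eta <= c * y.
  have -> : c * y = (2400 * m)%:R * eta by rewrite /c /y natrM; field.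
  by rewrite ler_wpM2r // ler_nat.
have growth : c ^+ 6 * T%:R <= c ^+ 6 * y ^+ 6.
  rewrite -exprMn; apply: (le_trans cT); apply: (le_trans T2).
  by apply: lerXn2r; rewrite ?nnegrE ?mulr_ge0 // ltW.
rewrite ler_pM2l ?exprn_gt0 // in growth.
apply: (le_trans growth); rewrite exprM; apply: lerXn2r; rewrite ?nnegrE //.
  by apply: exprn_ge0; lra.
by apply: le_trans (bernoulli_ineq m _); rewrite ?lerDr //; lra.
Qed.

Lemma decay_beats_horizon (R : realType) (eta : R) (T n : nat) :
  0 <= eta <= 2 -> 1 <= eta ^+ 3 * T%:R ^+ 2 -> (4800 ^ 6 <= T)%N ->
  (T <= 200 * n.+1)%N -> (1 - eta / 2) ^+ n * T%:R <= 1.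
Proof.
move=> /andP[eta_ge0 eta_le2] eta_cube T_large T_le.
have {T_large}grow : T%:R <= (1 + eta / 2) ^+ n.
  have T_ge : (4800 <= T)%N.
    by apply: leq_trans T_large; rewrite -{1}(expn1 4800) leq_pexp2l.
  have T_le' : (T <= 2400 * (n %/ 6))%N.
    by have := divn_eq n 6; have := ltn_pmod n (isT : (0 < 6)%N); clear T_large; lia.
  apply: (le_trans (horizon_le_growth eta_ge0 eta_cube T_large T_le')).
  by apply: ler_weXn2l; [clear T_large; lra | exact: leq_divM].
have : (1 - eta / 2) ^+ n * (1 + eta / 2) ^+ n <= 1.
  by rewrite -exprMn; apply: exprn_ile1; nra.
have : 0 <= (1 - eta / 2) ^+ n by apply: exprn_ge0; lra.
nra.
Qed.

Theorem mainTheorem13 (R : realType) (eta gamma : nat -> R) :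
  (forall T : nat, (0 < T)%N -> (100 %| T)%N ->
     wsu_valid 2 (eta T) (gamma T) /\ wsu_nontrivial T (eta T) (gamma T)) ->
  exists T0 : nat, forall T : nat, (T0 <= T)%N -> (0 < T)%N -> (100 %| T)%N ->
    forall t : nat,
      ((T %/ 100)%:R / 2 <= t%:R :> R) -> (t <= T %/ 100)%N ->
      wsu_expected_weight (eta T) (gamma T) (two_phase_loss R T) t ord0
        <= 1 / (2 * T)%:R.
Proof.
move=> H; exists (4800 ^ 6)%N => T T_large T_gt0 T_div t t_ge t_le.
have [valid [eta_ge _]] := H T T_gt0 T_div.
have [/andP[eta_gt0 eta_lt] _ _] := valid.
have T_le : (T <= 200 * t)%N.
  clear T_large; have : (T %/ 100 <= 2 * t)%N.
    by rewrite -(ler_nat R) natrM; move: t_ge; rewrite ler_pdivrMr ?ltr0n //; lra.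
  by have := divnK T_div; lia.
have t_gt0 : (0 < t)%N by clear T_large; lia.
have {T_large}decay : (1 - eta T / 2) ^+ t.-1 * T%:R <= 1.
  apply: decay_beats_horizon (nontrivial_eta_cube T_gt0 eta_ge) T_large _.
  - by apply/andP; split; lra.
  - by rewrite prednK.
have phase r : (1 <= r < 1 + t.-1)%N ->
    two_phase_loss R T r ord0 = 1 /\ two_phase_loss R T r ord_max = 0.
  by move=> hr; rewrite /two_phase_loss (_ : (r <= T %/ 100)%N) //; lia.
have init : first_arm_minor (wsu_init R 2).
  by rewrite /first_arm_minor /wsu_init !ffunE; split; [apply/andP; split|]; lra.
rewrite wsu_expected_weightE.
apply: (le_trans (wsu_expected_from_decay valid phase init)).
rewrite /wsu_init ffunE natrM ler_pdivlMr ?mulr_gt0 ?ltr0n //.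
by rewrite (_ : _ * (2 * T%:R) = (1 - eta T / 2) ^+ t.-1 * T%:R) //; field.
Qed.
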